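(* Let $G=(V,E)$ be a connected network with $N\ge 2$ nodes, and let $A=(\alpha_1,\dots,\alpha_{N-1})$ be its $\alpha$-array. Then $$\Big(\tfrac{N(N-1)}{2},0,\dots,0\Big)\succcurlyeq A\succcurlyeq C:=(N-1,N-2,\dots,1)$$ in the extended majorization order. Explicitly, $\sum_{j=1}^{N-1}\alpha_j=\sum_{j=1}^{N-1}(N-j)=\frac{N(N-1)}{2}$, and for every $i=1,\dots,N-2$, $$\frac{N(N-1)}{2}\ \ge\ \sum_{j=1}^{i}\alpha_j\ \ge\ \sum_{j=1}^{i}(N-j).$$
   Context: A network is a finite, simple, undirected, unweighted graph $G=(V,E)$, assumed connected, with $N=\#V$ nodes. The distance $d(u,v)$ between two nodes is the number of edges on a shortest path between them. For $j=1,\dots,N-1$, $\alpha_j$ denotes the number of unordered pairs $\{u,v\}$ of distinct nodes with $d(u,v)=j$; the array $A=(\alpha_1,\dots,\alpha_{N-1})$ is the $\alpha$-array of $G$. Extended majorization: for two sequences $X=(x_1,\dots,x_{N-1})$, $Y=(y_1,\dots,y_{N-1})$ of non-negative numbers (not necessarily ordered), $X\succcurlyeq Y$ means $\sum_{j=1}^{i}x_j\ge\sum_{j=1}^{i}y_j$ for all $i=1,\dots,N-2$ and $\sum_{j=1}^{N-1}x_j=\sum_{j=1}^{N-1}y_j$. Note that $C=(N-1,\dots,1)$ is the $\alpha$-array of the path (chain) on $N$ nodes. *)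

From mathcomp Require Import all_boot.
Set Implicit Arguments. Unset Strict Implicit. Unset Printing Implicit Defensive.

Definition simple_graph (T : finType) (e : rel T) : Prop :=
  symmetric e /\ irreflexive e.

Definition walk_k (T : finType) (e : rel T) (u v : T) (k : nat) : bool :=
  [exists p : k.-tuple T, path e u p && (last u p == v)].

Definition connected_graph (T : finType) (e : rel T) : Prop :=
  forall u v : T, exists k, walk_k e u v k.

(* graph distance: least k such that a walk of k edges joins u to v
   (searched among 0..#|T|-1; a shortest walk is a path, so this is exact
   in a connected graph) *)
Definition dist (T : finType) (e : rel T) (u v : T) : nat :=
  find (walk_k e u v) (iota 0 #|T|).

Definition alpha (T : finType) (e : rel T) (j : nat) : nat :=
  #|[set S : {set T} | [exists u, exists v,
       [&& u != v, S == [set u; v] & dist e u v == j]]]|.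

From mathcomp Require Import all_boot zify.
Set Implicit Arguments. Unset Strict Implicit. Unset Printing Implicit Defensive.

(* The upper bound and the total are plain counting: every pair of nodes is at
   some distance between 1 and N-1.  For the lower bound, enumerate the nodes
   so that every prefix P induces a connected subgraph.  Inside such a P, the
   ball of radius i around a node y meets min(i+1, |P|) nodes of P, so adding
   a node y to a prefix of size k creates at least min(i, k) new pairs at
   distance at most i; summing over k gives sum_(j <= i) (N - j), the count
   for the path on N nodes. *)

Section Distance.
Variables (T : finType) (e : rel T).

Lemma walk_kP u v k :
  reflect (exists p : seq T, [/\ size p = k, path e u p & last u p = v])
          (walk_k e u v k).
Proof.
apply: (iffP existsP) => [[p /andP[e_p /eqP <-]] | [p [<- e_p <-]]].
  by exists p; rewrite size_tuple.
by exists (in_tuple p); rewrite e_p eqxx.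
Qed.

Lemma walk_rcons u x z k : walk_k e u x k -> e x z -> walk_k e u z k.+1.
Proof.
move=> /walk_kP[p [<- e_p <-]] e_xz; apply/walk_kP; exists (rcons p z).
by rewrite size_rcons rcons_path e_p e_xz last_rcons.
Qed.

Lemma walk_shorten u v k :
  walk_k e u v k -> exists2 k', k' < #|T| & walk_k e u v k'.
Proof.
move=> /walk_kP[p [_ e_p <-]]; case: (shortenP e_p) => q e_q uniq_q _.
exists (size q); last by apply/walk_kP; exists q.
by have := max_card (mem (u :: q)); rewrite (card_uniqP uniq_q).
Qed.

Lemma dist_leq_card u v : dist e u v <= #|T|.
Proof. by rewrite /dist -{2}(size_iota 0 #|T|) find_size. Qed.

Lemma dist_min u v k : walk_k e u v k -> k < #|T| -> dist e u v <= k.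
Proof.
move=> w_k lt_k; rewrite leqNgt; apply/negP => /(before_find 0).
by rewrite nth_iota // add0n w_k.
Qed.

Lemma walk_dist u v : dist e u v < #|T| -> walk_k e u v (dist e u v).
Proof.
move=> lt_d; have has_w : has (walk_k e u v) (iota 0 #|T|).
  by rewrite has_find size_iota.
by have := nth_find 0 has_w; rewrite nth_iota // add0n.
Qed.

Lemma dist_ltn_card u v : connected_graph e -> dist e u v < #|T|.
Proof.
move=> e_conn; have [k w_k] := e_conn u v; have [k' lt_k' w_k'] := walk_shorten w_k.
exact: leq_ltn_trans (dist_min w_k' lt_k') lt_k'.
Qed.

Lemma dist_xx u : dist e u u = 0.
Proof.
have lt0T : 0 < #|T| by apply/card_gt0P; exists u.
have w0 : walk_k e u u 0 by apply/walk_kP; exists [::].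
by have := dist_min w0 lt0T; rewrite leqn0 => /eqP.
Qed.

Lemma dist_eq0 u v : dist e u v = 0 -> u = v.
Proof.
move=> d0; have lt_d : dist e u v < #|T| by rewrite d0; apply/card_gt0P; exists u.
by have := walk_dist lt_d; rewrite d0 => /walk_kP[[|y p] [//= _ _ <-]].
Qed.

(* A missing walk is encoded by [dist e u v = #|T|], hence the case split. *)
Lemma dist_edge u x z : e x z -> dist e u z <= (dist e u x).+1.
Proof.
move=> e_xz; have le_dz := dist_leq_card u z.
case: (ltnP (dist e u x) #|T|) => [/walk_dist w_x | le_Tx]; last lia.
case: (ltnP (dist e u x).+1 #|T|) => [|le_T]; last lia.
exact: dist_min (walk_rcons w_x e_xz).
Qed.

Hypothesis e_sym : symmetric e.

Lemma walk_rev u v k : walk_k e u v k -> walk_k e v u k.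
Proof.
move=> /walk_kP[p [<- e_p <-]]; apply/walk_kP; exists (rev (belast u p)).
rewrite size_rev size_belast rev_path (eq_path (e' := e)); last first.
  by move=> a b; rewrite /= e_sym.
split=> //; case: p {e_p} => [|y p] //=.
by rewrite rev_cons last_rcons.
Qed.

Lemma dist_sym u v : dist e u v = dist e v u.
Proof.
suff le_d x y : dist e x y <= dist e y x by apply/eqP; rewrite eqn_leq !le_d.
case: (ltnP (dist e y x) #|T|) => [lt_d | le_T].
  exact: dist_min (walk_rev (walk_dist lt_d)) lt_d.
exact: leq_trans (dist_leq_card x y) le_T.
Qed.

End Distance.

Section ConnectedSets.
Variables (T : finType) (e : rel T).

(* [P] induces a connected subgraph. *)
Definition cut_connected (P : {set T}) : Prop :=
  forall A : {set T}, A \subset P -> forall a b, a \in A -> b \in P -> b \notin A ->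
  exists x y, [/\ x \in A, y \in P, y \notin A & e x y].

Definition ball (P : {set T}) y r : {set T} := [set w in P | dist e y w <= r].

Lemma cut_connectedT : connected_graph e -> cut_connected [set: T].
Proof.
move=> e_conn A _ a b a_A _ b_A; have [k /walk_kP[p [_ e_p b_end]]] := e_conn a b.
elim: p a a_A e_p b_end => [|y p IHp] x x_A /=; first by move=> _ x_b; rewrite -x_b x_A in b_A.
case/andP=> e_xy e_p b_end; case: (boolP (y \in A)) => y_A; first exact: IHp y_A e_p b_end.
by exists x, y; rewrite inE.
Qed.

Lemma cut_connected1 x : cut_connected [set x].
Proof.
move=> A sAx a b a_A; rewrite inE => /eqP->.
by have := subsetP sAx a a_A; rewrite inE => /eqP<-; rewrite a_A.
Qed.

Lemma cut_connectedU1 P x y :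
  symmetric e -> cut_connected P -> x \in P -> e x y -> cut_connected (y |: P).
Proof.
move=> e_sym P_conn x_P e_xy A sAP a b a_A b_P b_A.
have cut_in_P a' b' : a' \in A -> a' \in P -> b' \in P -> b' \notin A ->
    exists x' y', [/\ x' \in A, y' \in y |: P, y' \notin A & e x' y'].
  move=> a'_A a'_P b'_P b'_A.
  have a'_AP : a' \in A :&: P by rewrite inE a'_A.
  have b'_AP : b' \notin A :&: P by rewrite inE (negbTE b'_A).
  have [x' [y' [x'_AP y'_P y'_AP e_x'y']]] := P_conn _ (subsetIr A P) _ _ a'_AP b'_P b'_AP.
  exists x', y'; move: x'_AP y'_AP; rewrite !inE y'_P orbT andbT => /andP[-> _].
  by split.
case: (boolP (x \in A)) => x_A; case: (boolP (y \in A)) => y_A.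
- have {}b_P : b \in P by case/setU1P: b_P => [b_y | //]; rewrite b_y y_A in b_A.
  exact: cut_in_P x_A x_P b_P b_A.
- by exists x, y; rewrite setU11.
- by exists y, x; rewrite inE x_P orbT e_sym.
- have a_P : a \in P.
    by case/setU1P: (subsetP sAP a a_A) => [a_y | //]; rewrite -a_y a_A in y_A.
  exact: cut_in_P a_A a_P x_P x_A.
Qed.

Lemma card_ball P y r :
  cut_connected P -> y \in P -> minn r.+1 #|P| <= #|ball P y r|.
Proof.
move=> P_conn y_P; have y_ball r' : y \in ball P y r' by rewrite inE y_P dist_xx.
elim: r => [|r IHr].
  have : 0 < #|ball P y 0| by apply/card_gt0P; exists y.
  lia.
have sBP : ball P y r \subset P by apply/subsetP => w; rewrite inE => /andP[].
have sBB : ball P y r \subset ball P y r.+1.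
  by apply/subsetP => w; rewrite !inE => /andP[-> d_w]; lia.
case: (boolP (P \subset ball P y r)) => [sPB | /subsetPn[b b_P b_B]].
  by have := subset_leq_card (subset_trans sPB sBB); lia.
have [x [z [x_B z_P z_B e_xz]]] := P_conn _ sBP y b (y_ball r) b_P b_B.
have sB : z |: ball P y r \subset ball P y r.+1.
  apply/subsetP => w; rewrite !inE => /predU1P[-> | /andP[-> d_w]]; last by lia.
  move: x_B; rewrite inE z_P => /andP[_ d_x].
  by apply: leq_trans (dist_edge y e_xz) _.
by have := subset_leq_card sB; rewrite cardsU1 z_B; lia.
Qed.

End ConnectedSets.

Section ClosePairs.
Variables (T : finType) (e : rel T).

Definition close_pairs (P : {set T}) i : {set {set T}} :=
  [set S : {set T} | [exists u, exists v,
     [&& u != v, S == [set u; v], u \in P, v \in P & dist e u v <= i]]].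

Definition dist_pairs j : {set {set T}} :=
  [set S : {set T} | [exists u, exists v,
     [&& u != v, S == [set u; v] & dist e u v == j]]].

(* The number of pairs at distance at most [i] in the path on [k] nodes. *)
Definition chain_close_pairs k i := \sum_(1 <= j < i.+1) (k - j).

Lemma chain_close_pairs0 i : chain_close_pairs 0 i = 0.
Proof. by rewrite /chain_close_pairs big1. Qed.

Lemma chain_close_pairsS k i :
  chain_close_pairs k.+1 i = chain_close_pairs k i + minn i k.
Proof.
rewrite /chain_close_pairs; elim: i => [|i IHi]; first by rewrite !big_geq // min0n.
by rewrite !(big_nat_recr i.+1) //= IHi; lia.
Qed.

Lemma sum_sub_bin2 m : \sum_(1 <= j < m) (m - j) = 'C(m, 2).
Proof.
case: m => [|m]; first by rewrite big_geq.
elim: m => [|m IHm]; first by rewrite big_geq.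
rewrite big_nat_recl // binS bin1 addnC -IHm.
by congr (_ + _); apply: eq_bigr => j _; rewrite subSS.
Qed.

Lemma close_pairsS (P P' : {set T}) i :
  P \subset P' -> close_pairs P i \subset close_pairs P' i.
Proof.
move=> sPP'; apply/subsetP => S; rewrite !inE => /existsP[u /existsP[v]].
case/and5P=> uv S_uv u_P v_P d_uv; apply/existsP; exists u; apply/existsP; exists v.
by rewrite uv S_uv (subsetP sPP' u u_P) (subsetP sPP' v v_P).
Qed.

Lemma close_pairs_sub_pairs (P : {set T}) i :
  close_pairs P i \subset [set S : {set T} | #|S| == 2].
Proof.
apply/subsetP => S; rewrite !inE => /existsP[u /existsP[v /and5P[uv /eqP-> _ _ _]]].
by rewrite cards2 uv.
Qed.

Lemma set2_eq (u v u' v' : T) :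
  [set u; v] = [set u'; v'] -> (u = u' /\ v = v') \/ (u = v' /\ v = u').
Proof.
move=> eq_S.
have : u \in [set u'; v'] by rewrite -eq_S !inE eqxx.
have : v \in [set u'; v'] by rewrite -eq_S !inE eqxx orbT.
have : u' \in [set u; v] by rewrite eq_S !inE eqxx.
have : v' \in [set u; v] by rewrite eq_S !inE eqxx orbT.
rewrite !inE => /orP[]/eqP h1 /orP[]/eqP h2 /orP[]/eqP h3 /orP[]/eqP h4;
  first [by left; split; congruence | by right; split; congruence].
Qed.

Lemma close_pairs_full i :
  connected_graph e -> #|T| <= i.+1 ->
  close_pairs [set: T] i = [set S : {set T} | #|S| == 2].
Proof.
move=> e_conn le_T; apply/eqP; rewrite eqEsubset close_pairs_sub_pairs.
apply/subsetP => S; rewrite inE => /cards2P[u [v [uv ->]]].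
rewrite inE; apply/existsP; exists u; apply/existsP; exists v.
by rewrite uv eqxx !inE; have := dist_ltn_card u v e_conn; lia.
Qed.

Lemma close_pairsT0 : close_pairs [set: T] 0 = set0.
Proof.
apply/setP => S; rewrite !inE; apply/existsP => -[u /existsP[v /and5P[uv _ _ _]]].
by rewrite leqn0 => /eqP/dist_eq0 u_v; rewrite u_v eqxx in uv.
Qed.

Lemma close_pairsT_S i :
  close_pairs [set: T] i.+1 = close_pairs [set: T] i :|: dist_pairs i.+1.
Proof.
apply/setP => S; rewrite !inE; apply/idP/orP.
  case/existsP=> u /existsP[v /and5P[uv S_uv _ _]]; rewrite leq_eqVlt ltnS.
  case/orP=> d_uv; [right | left]; apply/existsP; exists u; apply/existsP; exists v.
    by rewrite uv S_uv d_uv.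
  by rewrite uv S_uv !inE d_uv.
case=> /existsP[u /existsP[v]] => [/and5P[uv S_uv _ _ d_uv] | /and3P[uv S_uv /eqP d_uv]];
  apply/existsP; exists u; apply/existsP; exists v; rewrite uv S_uv !inE /=.
  exact: leqW.
by rewrite d_uv.
Qed.

Lemma setI_close_dist_pairs i :
  symmetric e -> close_pairs [set: T] i :&: dist_pairs i.+1 = set0.
Proof.
move=> e_sym; apply/setP => S; rewrite !inE; apply/andP => -[].
case/existsP=> u /existsP[v /and5P[_ /eqP-> _ _ d_uv]].
case/existsP=> u' /existsP[v' /and3P[_ /eqP/set2_eq eq_uv /eqP d_uv']].
case: eq_uv => -[eq_u eq_v]; move: d_uv; rewrite eq_u eq_v.
  by rewrite d_uv' ltnn.
by rewrite dist_sym // d_uv' ltnn.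
Qed.

Lemma card_ball_U1 (P : {set T}) y i :
  y \notin P -> cut_connected e (y |: P) -> minn i #|P| <= #|ball e P y i|.
Proof.
move=> y_P P_conn; have := card_ball i P_conn (setU11 y P).
have sB : ball e (y |: P) y i \subset y |: ball e P y i.
  by apply/subsetP => w; rewrite !inE => /andP[/orP[-> // | ->] ->]; rewrite orbT.
have := subset_leq_card sB; rewrite !cardsU1 y_P inE (negbTE y_P); lia.
Qed.

(* The new pairs join [y] to the nodes of its ball in [P]. *)
Lemma close_pairsU1 (P : {set T}) y i :
  y \notin P -> cut_connected e (y |: P) ->
  #|close_pairs P i| + minn i #|P| <= #|close_pairs (y |: P) i|.
Proof.
move=> y_P P_conn; set B := ball e P y i; set New := [set [set y; w] | w in B].
have ball_P w : w \in B -> w \in P /\ dist e y w <= i by rewrite inE => /andP.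
have card_New : #|New| = #|B|.
  apply: card_in_imset => w1 w2 /ball_P[w1_P _] _ /set2_eq[[_ //] | [y_w2 w1_y]].
  by rewrite -w1_y w1_P in y_P.
have disj : close_pairs P i :&: New = set0.
  apply/setP => S; rewrite !inE; apply/andP => -[].
  case/existsP=> u /existsP[v /and5P[_ /eqP-> u_P v_P _]].
  case/imsetP=> w _ /esym/set2_eq[[y_u _] | [y_v _]].
    by rewrite y_u u_P in y_P.
  by rewrite y_v v_P in y_P.
have sub : close_pairs P i :|: New \subset close_pairs (y |: P) i.
  rewrite subUset close_pairsS ?subsetUr //=.
  apply/subsetP => _ /imsetP[w /ball_P[w_P d_w] ->].
  rewrite inE; apply/existsP; exists y; apply/existsP; exists w.
  rewrite eqxx d_w !inE eqxx w_P orbT /= andbT.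
  by apply: contraNneq _ y_P => ->.
have : minn i #|P| <= #|B| := card_ball_U1 i y_P P_conn.
have := subset_leq_card sub.
by rewrite cardsU disj cards0 subn0 card_New; lia.
Qed.

End ClosePairs.

Section AlphaArray.
Variables (T : finType) (e : rel T).
Hypotheses (e_sym : symmetric e) (e_conn : connected_graph e).

Lemma exists_connected_close_pairs i k : 0 < k <= #|T| ->
  exists P : {set T}, [/\ #|P| = k, cut_connected e P
                        & chain_close_pairs k i <= #|close_pairs e P i|].
Proof.
elim: k => [// | k IHk] lt_k; have [-> | k_gt0] := posnP k.
  have /card_gt0P[x _] : 0 < #|T| by lia.
  exists [set x]; split; [exact: cards1 | exact: cut_connected1 |].
  by rewrite chain_close_pairsS chain_close_pairs0 minn0.
have lt_k' : 0 < k <= #|T| by lia.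
have [P [card_P P_conn count_P]] := IHk lt_k'.
have [b _ b_P] : exists2 b, b \in [set: T] & b \notin P.
  by apply/subsetPn; apply: contraTN lt_k => /subset_leq_card; rewrite cardsT card_P; lia.
have [a a_P] : exists a, a \in P by apply/card_gt0P; rewrite card_P.
have [x [y [x_P _ y_P e_xy]]] := cut_connectedT e_conn (subsetT P) a_P (in_setT b) b_P.
have Py_conn := cut_connectedU1 e_sym P_conn x_P e_xy.
exists (y |: P); split => //; first by rewrite cardsU1 y_P card_P.
have := close_pairsU1 i y_P Py_conn; rewrite chain_close_pairsS card_P; lia.
Qed.

Lemma sum_alpha_close_pairs i :
  \sum_(1 <= j < i.+1) alpha e j = #|close_pairs e [set: T] i|.
Proof.
elim: i => [|i IHi]; first by rewrite big_geq // close_pairsT0 cards0.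
rewrite big_nat_recr //= IHi close_pairsT_S cardsU setI_close_dist_pairs //.
by rewrite cards0 subn0.
Qed.

Lemma sum_alpha_leq_bin2 i : \sum_(1 <= j < i.+1) alpha e j <= 'C(#|T|, 2).
Proof.
by rewrite sum_alpha_close_pairs -card_draws subset_leq_card ?close_pairs_sub_pairs.
Qed.

Lemma sum_alpha_bin2 : \sum_(1 <= j < #|T|) alpha e j = 'C(#|T|, 2).
Proof.
case card_T: #|T| => [|n]; first by rewrite big_geq.
by rewrite sum_alpha_close_pairs close_pairs_full ?card_T // card_draws card_T.
Qed.

Lemma chain_leq_sum_alpha i :
  \sum_(1 <= j < i.+1) (#|T| - j) <= \sum_(1 <= j < i.+1) alpha e j.
Proof.
rewrite sum_alpha_close_pairs -/(chain_close_pairs #|T| i).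
have [-> | T_gt0] := posnP #|T|; first by rewrite chain_close_pairs0.
have T_le : 0 < #|T| <= #|T| by rewrite T_gt0 leqnn.
have [P [_ _ count_P]] := exists_connected_close_pairs i T_le.
exact: leq_trans count_P (subset_leq_card (close_pairsS e i (subsetT P))).
Qed.

End AlphaArray.

Theorem mainTheorem1 (T : finType) (e : rel T) :
  simple_graph e -> connected_graph e -> 2 <= #|T| ->
  let N := #|T| in
  \sum_(1 <= j < N) alpha e j = \sum_(1 <= j < N) (N - j) /\
  \sum_(1 <= j < N) (N - j) = N * (N - 1) %/ 2 /\
  (forall i, 1 <= i <= N - 2 ->
     N * (N - 1) %/ 2 >= \sum_(1 <= j < i.+1) alpha e j /\
     \sum_(1 <= j < i.+1) alpha e j >= \sum_(1 <= j < i.+1) (N - j)).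
Proof.
move=> [e_sym _] e_conn _ N; rewrite {}/N.
have bin2E : 'C(#|T|, 2) = #|T| * (#|T| - 1) %/ 2 by rewrite bin2 -divn2 subn1.
split; first by rewrite sum_alpha_bin2 // sum_sub_bin2.
split; first by rewrite sum_sub_bin2.
move=> i _; rewrite -bin2E; split.
- exact: sum_alpha_leq_bin2.
- exact: chain_leq_sum_alpha.
Qed.
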